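(* Let $(G,+)$ be an abelian group of order $n$ with a subgroup $H$ of order $h$. Suppose there exists an HDM$(k,n;h)$ over $G$ with hole $H$, and there exists a DCA$(k,h+1;h)$ over $H$ satisfying P1 and P2. Then there exists a DCA$(k,n+1;n)$ over $G$ satisfying P1 and P2. Moreover, if the HDM$(k,n;h)$ and the DCA$(k,h+1;h)$ are cyclic, then there exists a cyclic DCA$(k,n+1;n)$ satisfying P1 and P2.
   Context: A holey difference matrix HDM$(k,n;h)$ over an abelian group $(G,+)$ of order $n$ with hole a subgroup $H$ of order $h$ is an $(n-h)\times k$ matrix $Q=[q(i,j)]$ with entries in $G$ such that for every pair of distinct columns $j,j'$ the multiset $\{q(i,j)-q(i,j') : 0\le i\le n-h-1\}$ contains every element of $G\setminus H$ exactly once; it may be normalized so that its last column is all $0$. It is cyclic if $G=\mathbb{Z}_n$ (and then $H$ is the subgroup of $\mathbb{Z}_n$ of order $h$). A difference covering array DCA$(k,\eta;n)$ over an abelian group $G$ of order $n$ is an $\eta\times k$ matrix with entries in $G$ such that for every pair of distinct columns $j,j'$ the multiset of row differences $q(i,j)-q(i,j')$ contains every element of $G$ at least once; it is cyclic if $G=\mathbb{Z}_n$. A DCA$(k,n+1;n)$ is taken in normalized form: all entries of its last row (row $n$) and last column (column $k-1$) equal $0$. It satisfies P1 if $0$ occurs at least twice in every column, and P2 if for all distinct columns $j,j'$ with $j\neq k-1\neq j'$, the set $\{q(i,j)-q(i,j') : 0\le i\le n-1\}$ equals $G\setminus\{0\}$. *)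

From HB Require Import structures.
From mathcomp Require Import all_boot all_order all_algebra.
Set Implicit Arguments. Unset Strict Implicit. Unset Printing Implicit Defensive.
Import GRing.Theory.
Local Open Scope ring_scope.

(* Abelian groups of finite order are finZmodType's (written additively).
   A subgroup H is a set S with zmod_closed S (library notion). *)

Definition is_HDM (G : finZmodType) (H : {set G}) (m k : nat)
    (Q : 'M[G]_(m, k)) : Prop :=
  forall j j' : 'I_k, j != j' ->
    forall g : G, g \notin H -> #|[set i : 'I_m | Q i j - Q i j' == g]| = 1%N.

Definition is_DCA (G : finZmodType) (S : {set G}) (eta k : nat)
    (Q : 'M[G]_(eta, k)) : Prop :=
  (forall i j, Q i j \in S) /\
  (forall j j' : 'I_k, j != j' ->
    forall g, g \in S -> exists i : 'I_eta, Q i j - Q i j' = g).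

Definition DCA_normalized (G : finZmodType) (m k : nat)
    (Q : 'M[G]_(m.+1, k)) : Prop :=
  forall (i : 'I_m.+1) (j : 'I_k), (nat_of_ord i == m) || (j.+1 == k)%N -> Q i j = 0.

Definition DCA_P1 (G : finZmodType) (eta k : nat) (Q : 'M[G]_(eta, k)) : Prop :=
  forall j : 'I_k, (1 < #|[set i : 'I_eta | Q i j == 0%R]|)%N.

Definition DCA_P2 (G : finZmodType) (S : {set G}) (m k : nat)
    (Q : 'M[G]_(m.+1, k)) : Prop :=
  forall j j' : 'I_k, j != j' -> (j.+1 != k)%N -> (j'.+1 != k)%N ->
    [set Q i j - Q i j' | i : 'I_m.+1 & (i < m)%N] = S :\ 0.

Definition DCA_P12 (G : finZmodType) (S : {set G}) (m k : nat)
    (Q : 'M[G]_(m.+1, k)) : Prop :=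
  [/\ is_DCA S Q, DCA_normalized Q, DCA_P1 Q & DCA_P2 S Q].

From mathcomp Require Import all_boot all_order all_algebra.
From mathcomp Require Import fingroup cyclic.

(* Normalize the HDM so that its last column is zero and stack it on top of
   the DCA over the hole H.  For two distinct columns the HDM rows produce
   every difference outside H exactly once, and the first #|H| rows of the
   DCA produce exactly the nonzero elements of H, which gives P2 and the
   covering property; the DCA rows also carry the zero last row and the
   zeros required by P1.  In the cyclic case H = <[x]> in Z_(n+1), and
   a |-> a x embeds Z_(h+1) onto H, transporting the cyclic DCA onto H. *)

Set Implicit Arguments.
Unset Strict Implicit.
Import GRing.Theory.
Local Open Scope ring_scope.

Section HoleyDifferenceMatrix.

Variables (G : finZmodType) (H : {set G}) (M k : nat) (Q : 'M[G]_(M, k)).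
Hypotheses (card_holeC : #|~: H| = M) (hdmQ : is_HDM H Q).

Lemma HDM_diffsE (j j' : 'I_k) :
  j != j' -> [set Q i j - Q i j' | i in [set: 'I_M]] = ~: H.
Proof.
move=> neq_jj'; apply/eqP; rewrite eq_sym eqEcard; apply/andP; split.
  apply/subsetP=> g; rewrite inE => gNH.
  have := hdmQ neq_jj' gNH; case: (set_0Vmem [set i | Q i j - Q i j' == g]).
    by move=> ->; rewrite cards0.
  by case=> i; rewrite inE => /eqP <- _; apply: imset_f.
rewrite card_holeC; apply: leq_trans (leq_imset_card _ _) _.
by rewrite cardsT card_ord.
Qed.

End HoleyDifferenceMatrix.

Section Stack.

Variables (R : Type) (M m k : nat) (A : 'M[R]_(M, k)) (D : 'M[R]_(m.+1, k)).

Definition stack_mx : 'M[R]_((M + m).+1, k) := castmx (addnS M m, erefl) (col_mx A D).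

Definition stack_up (i : 'I_M) : 'I_(M + m).+1 := cast_ord (addnS M m) (lshift m.+1 i).
Definition stack_down (i : 'I_m.+1) : 'I_(M + m).+1 := cast_ord (addnS M m) (rshift M i).

Lemma stack_mxEu i j : stack_mx (stack_up i) j = A i j.
Proof. by rewrite castmxE cast_ordK cast_ord_id col_mxEu. Qed.

Lemma stack_mxEd i j : stack_mx (stack_down i) j = D i j.
Proof. by rewrite castmxE cast_ordK cast_ord_id col_mxEd. Qed.

Lemma stack_rowP (P : 'I_(M + m).+1 -> Prop) :
  (forall i, P (stack_up i)) -> (forall i, P (stack_down i)) -> forall i, P i.
Proof.
move=> Pup Pdown i; rewrite -(cast_ordKV (addnS M m) i).
by case: (split_ordP (cast_ord (esym (addnS M m)) i)) => i0 ->;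
  [apply: Pup | apply: Pdown].
Qed.

Lemma stack_down_inj : injective stack_down.
Proof. by move=> i i' /cast_ord_inj/rshift_inj. Qed.

End Stack.

Arguments stack_up {M m} i.
Arguments stack_down {M m} i.

Lemma stack_diffsE (G : finZmodType) (M m k : nat) (A : 'M[G]_(M, k))
    (D : 'M[G]_(m.+1, k)) (j j' : 'I_k) (S : {set 'I_(M + m).+1}) :
  [set stack_mx A D i j - stack_mx A D i j' | i in S] =
  [set A i j - A i j' | i in stack_up @^-1: S]
    :|: [set D i j - D i j' | i in stack_down @^-1: S].
Proof.
apply/setP=> g; apply/imsetP/setUP => [[i]|].
  elim/(@stack_rowP M m): i => i Si ->.
    by left; rewrite !stack_mxEu; apply: imset_f; rewrite inE.
  by right; rewrite !stack_mxEd; apply: imset_f; rewrite inE.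
case=> /imsetP[i]; rewrite inE => Si ->.
  by exists (stack_up i); rewrite ?stack_mxEu.
by exists (stack_down i); rewrite ?stack_mxEd.
Qed.

Definition col_normalize (G : finZmodType) (M k : nat) (Q : 'M[G]_(M, k.+1)) :=
  \matrix_(i, j) (Q i j - Q i ord_max).

Lemma col_normalizeB (G : finZmodType) (M k : nat) (Q : 'M[G]_(M, k.+1)) i j j' :
  col_normalize Q i j - col_normalize Q i j' = Q i j - Q i j'.
Proof. by rewrite !mxE opprB addrA subrK. Qed.

Section Filling.

Variables (G : finZmodType) (H : {set G}) (M m k : nat).
Variables (Q : 'M[G]_(M, k.+1)) (D : 'M[G]_(m.+1, k.+1)).
Hypotheses (H0 : 0 \in H) (card_holeC : #|~: H| = M).
Hypotheses (hdmQ : is_HDM H Q) (dcaD : DCA_P12 H D).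

Let E := stack_mx (col_normalize Q) D.

Lemma filled_diffsE j j' (S : {set 'I_(M + m).+1}) :
  [set E i j - E i j' | i in S] =
  [set Q i j - Q i j' | i in stack_up @^-1: S]
    :|: [set D i j - D i j' | i in stack_down @^-1: S].
Proof.
rewrite stack_diffsE; congr (_ :|: _).
by apply: eq_imset => i; apply: col_normalizeB.
Qed.

Lemma filled_is_DCA : is_DCA [set: G] E.
Proof.
have [[_ coverD] _ _ _] := dcaD.
split=> [i j | j j' neq_jj' g _]; first by rewrite inE.
suff : g \in [set E i j - E i j' | i in [set: 'I_(M + m).+1]].
  by case/imsetP=> i _ ->; exists i.
rewrite filled_diffsE !preimsetT (HDM_diffsE card_holeC hdmQ neq_jj').
have [gH | gNH] := boolP (g \in H); apply/setUP; last by left; rewrite inE.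
by right; have [i <-] := coverD _ _ neq_jj' _ gH; apply: imset_f.
Qed.

Lemma filled_normalized : DCA_normalized E.
Proof.
have [_ normD _ _] := dcaD.
elim/(@stack_rowP M m) => i j /orP[/eqP lastrow | /eqP lastcol].
- by move: lastrow (ltn_ord i) => /= ->; rewrite ltnNge leq_addr.
- have -> : j = ord_max by apply: val_inj; case: lastcol.
  by rewrite stack_mxEu mxE subrr.
- by rewrite stack_mxEd normD //; move: lastrow => /= /eqP; rewrite eqn_add2l => ->.
- by rewrite stack_mxEd normD // lastcol eqxx orbT.
Qed.

Lemma filled_P1 : DCA_P1 E.
Proof.
have [_ _ P1D _] := dcaD.
move=> j; apply: leq_trans (P1D j) _.
rewrite -(card_imset _ (@stack_down_inj M m)); apply: subset_leq_card.
by apply/subsetP=> _ /imsetP[i + ->]; rewrite !inE stack_mxEd.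
Qed.

Lemma filled_P2 : DCA_P2 [set: G] E.
Proof.
have [_ _ _ P2D] := dcaD.
move=> j j' neq_jj' jN j'N; rewrite filled_diffsE.
have -> : stack_up @^-1: [set i : 'I_(M + m).+1 | (i < M + m)%N] = [set: 'I_M].
  by apply/setP=> i; rewrite !inE /= ltn_addr.
have -> : stack_down @^-1: [set i : 'I_(M + m).+1 | (i < M + m)%N]
          = [set i : 'I_m.+1 | (i < m)%N].
  by apply/setP=> i; rewrite !inE /= ltn_add2l.
rewrite (HDM_diffsE card_holeC hdmQ neq_jj') P2D //.
apply/setP=> g; rewrite !inE andbT.
have [gH | gNH] := boolP (g \in H); first by rewrite andbT.
by symmetry; apply: contraNneq gNH => ->.
Qed.

Lemma filled_DCA_P12 : DCA_P12 [set: G] E.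
Proof.
by split; [apply: filled_is_DCA | apply: filled_normalized |
           apply: filled_P1 | apply: filled_P2].
Qed.

End Filling.

Lemma DCA_P12_no_column (G : finZmodType) (S : {set G}) (m : nat)
    (D : 'M[G]_(m.+1, 0)) :
  DCA_P12 S D.
Proof. by split; [split=> [i [] | []] | move=> i [] | case | case]. Qed.

Lemma fill_hole_DCA_P12 (G : finZmodType) (H : {set G}) (k M m : nat) :
  0 \in H -> #|~: H| = M -> #|H| = m ->
  (exists Q : 'M[G]_(M, k), is_HDM H Q) ->
  (exists D : 'M[G]_(m.+1, k), DCA_P12 H D) ->
  exists E : 'M[G]_(#|G|.+1, k), DCA_P12 [set: G] E.
Proof.
move=> H0 card_holeC cardH [Q hdmQ] [D dcaD].
rewrite -(cardsC H) addnC card_holeC cardH.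
case: k Q D hdmQ dcaD => [|k] Q D hdmQ dcaD.
  by exists 0; apply: DCA_P12_no_column.
exists (stack_mx (col_normalize Q) D).
exact: filled_DCA_P12 H0 card_holeC hdmQ dcaD.
Qed.

Section MapDCA.

Variables (U V : finZmodType) (f : U -> V).
Hypotheses (fB : {morph f : x y / x - y}) (f_inj : injective f).

Lemma map_DCA_P12 (S : {set U}) (m k : nat) (D : 'M[U]_(m.+1, k)) :
  DCA_P12 S D -> DCA_P12 (f @: S) (map_mx f D).
Proof.
case=> [[inD coverD] normD P1D P2D].
have f0 : f 0 = 0 by rewrite -(subrr 0) fB subrr.
have fN0 a : (f a == 0) = (a == 0) by rewrite -f0 (inj_eq f_inj).
have mapB i j j' : map_mx f D i j - map_mx f D i j' = f (D i j - D i j').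
  by rewrite !mxE fB.
split.
- split=> [i j | j j' neq_jj' _ /imsetP[a Sa ->]]; first by rewrite mxE imset_f.
  by have [i <-] := coverD _ _ neq_jj' _ Sa; exists i; rewrite mapB.
- by move=> i j lastij; rewrite mxE normD.
- move=> j; apply: leq_trans (P1D j) (eq_leq _); apply: eq_card => i.
  by rewrite !inE mxE fN0.
- move=> j j' neq_jj' jN j'N; under eq_imset do rewrite mapB.
  rewrite imset_comp P2D //; apply/setP=> g; rewrite !inE.
  apply/imsetP/andP => [[a] | [gN0 /imsetP[a Sa ga]]].
    by rewrite !inE => /andP[aN0 Sa] ->; rewrite imset_f // fN0.
  exists a; rewrite // !inE Sa andbT.
  by apply: contra_neq gN0; rewrite ga => ->.
Qed.

End MapDCA.

Lemma Zp_subgroup_cycle (n : nat) (H : {set 'I_n.+1}) :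
  zmod_closed H -> exists x : 'I_n.+1, H = <[x]>%g.
Proof.
case=> H0 HB; have HN x : x \in H -> - x \in H by rewrite -sub0r; apply: HB.
have gH : group_set H.
  apply/group_setP; split=> // x y xH yH.
  by rewrite -[y]opprK HB ?HN.
have cyclicT : cyclic [set: 'I_n.+1] by rewrite Zp_cycle cycle_cyclic.
exact/cyclicP/(@cyclicS _ _ (Group gH) (subsetT _) cyclicT).
Qed.

Section CyclicEmbedding.

Variables (n h : nat) (x : 'I_n.+1).
Hypothesis order_x : #[x]%g = h.+1.

Definition cyclic_emb (a : 'I_h.+1) : 'I_n.+1 := x *+ a.

Lemma cyclic_emb_mod (m : nat) : x *+ (m %% h.+1) = x *+ m.
Proof. by rewrite !Zp_mulrn -!Zp_expg -order_x expg_mod_order. Qed.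

(* The sum in 'I_h.+1 is (a + b) %% h.+1 by conversion. *)
Lemma cyclic_embD : {morph cyclic_emb : a b / a + b}.
Proof. by move=> a b; rewrite /cyclic_emb -mulrnDr -[in RHS]cyclic_emb_mod. Qed.

Lemma cyclic_embB : {morph cyclic_emb : a b / a - b}.
Proof. by move=> a b; apply/eqP; rewrite eq_sym subr_eq -cyclic_embD subrK. Qed.

Lemma cyclic_emb_inj : injective cyclic_emb.
Proof.
move=> a b; rewrite /cyclic_emb !Zp_mulrn -!Zp_expg => /eqP.
by rewrite eq_expg_mod_order order_x !modn_small // => /eqP /val_inj.
Qed.

Lemma cyclic_emb_image : cyclic_emb @: [set: 'I_h.+1] = <[x]>%g.
Proof.
apply/setP=> y; apply/imsetP/cycleP => [[a _ ->] | [m ->]].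
  by exists a; rewrite /cyclic_emb Zp_mulrn Zp_expg.
exists (inord (m %% h.+1)) => //.
by rewrite /cyclic_emb inordK ?ltn_pmod // cyclic_emb_mod Zp_mulrn Zp_expg.
Qed.

End CyclicEmbedding.

Theorem mainTheorem6 :
  (forall (G : finZmodType) (H : {set G}) (k : nat),
      zmod_closed H ->
      (exists Q : 'M[G]_(#|G| - #|H|, k), is_HDM H Q) ->
      (exists D : 'M[G]_(#|H|.+1, k), DCA_P12 H D) ->
      exists D : 'M[G]_(#|G|.+1, k), DCA_P12 [set: G] D)
  /\
  (* cyclic case: G = Z_(n+1), H its subgroup of order h+1 *)
  (forall (n h k : nat) (H : {set 'I_n.+1}),
      zmod_closed H -> #|H| = h.+1 ->
      (exists Q : 'M['I_n.+1]_(n.+1 - h.+1, k), is_HDM H Q) ->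
      (exists D : 'M['I_h.+1]_(h.+2, k), DCA_P12 [set: 'I_h.+1] D) ->
      exists D : 'M['I_n.+1]_(n.+2, k), DCA_P12 [set: 'I_n.+1] D).
Proof.
split=> [G H k [H0 _] | n h k H closedH cardH hdm [D dcaD]].
  by apply: fill_hole_DCA_P12 => //; rewrite cardsCs setCK.
have [x defH] := Zp_subgroup_cycle closedH.
have order_x : #[x]%g = h.+1 by rewrite -cardH defH.
have dcaH : DCA_P12 H (map_mx (@cyclic_emb n h x) D).
  rewrite defH -(cyclic_emb_image order_x).
  exact: (map_DCA_P12 (cyclic_embB order_x) (cyclic_emb_inj order_x) dcaD).
have H0 : 0 \in H by case: closedH.
have card_holeC : #|~: H| = (n.+1 - h.+1)%N by rewrite cardsCs setCK card_ord cardH.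
have := fill_hole_DCA_P12 H0 card_holeC cardH hdm (ex_intro _ _ dcaH).
by rewrite card_ord.
Qed.
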